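(* Let $p$ be a prime number, let $X$ be a nonempty totally ordered set, and let $s$ be an integer with $1\leq s<p$. Then the images of the Lyndon words of length $s$ over $X$ generate the $\mathbb{Z}/p$-module $\mathrm{Sh}_{\mathbb{Z}}(X)_{\mathrm{indec},s}\otimes(\mathbb{Z}/p)$.
   Context: $X^*$ is the free monoid on $X$, whose elements are regarded as associative words in the alphabet $X$; $|w|$ denotes the length of a word $w$, and $X^s$ the set of words of length $s$. $X^*$ carries the alphabetical (lexicographic) order induced by the total order on $X$. A nonempty word $w$ is a Lyndon word if it is strictly smaller in this order than all its nontrivial proper right factors (suffixes). $\mathbb{Z}\langle X\rangle$ is the free $\mathbb{Z}$-module with basis $X^*$, graded by word length. The shuffle product of words $u=(x_1\cdots x_r)$ and $v=(x_{r+1}\cdots x_{r+t})$ is $u\,ш\,v=\sum_\sigma (x_{\sigma(1)}\cdots x_{\sigma(r+t)})$, summing over all permutations $\sigma$ of $1,\dots,r+t$ with $\sigma(1)<\cdots<\sigma(r)$ and $\sigma(r+1)<\cdots<\sigma(r+t)$; extended bilinearly it makes $\mathbb{Z}\langle X\rangle$ into the shuffle algebra $\mathrm{Sh}_{\mathbb{Z}}(X)$. Let $M$ be the $\mathbb{Z}$-submodule of $\mathbb{Z}\langle X\rangle$ generated by all $u\,ш\,v$ with $u,v\in X^*$ nonempty words. The indecomposable quotient is $\mathrm{Sh}_{\mathbb{Z}}(X)_{\mathrm{indec}}=\mathbb{Z}\langle X\rangle/M$, graded by word length; $\mathrm{Sh}_{\mathbb{Z}}(X)_{\mathrm{indec},s}$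 is its degree-$s$ component, and the ''image'' of a word $w\in X^s$ means the image of $w$ under $\mathbb{Z}\langle X\rangle_s\to \mathrm{Sh}_{\mathbb{Z}}(X)_{\mathrm{indec},s}\to \mathrm{Sh}_{\mathbb{Z}}(X)_{\mathrm{indec},s}\otimes(\mathbb{Z}/p)$. *)

From HB Require Import structures.
From mathcomp Require Import all_boot all_order all_algebra.
From mathcomp.multinomials Require Import freeg.
Set Implicit Arguments. Unset Strict Implicit. Unset Printing Implicit Defensive.
Import Order.TTheory GRing.Theory Num.Theory.
Local Open Scope ring_scope.

Section Shuffle.
Variables (d : Order.disp_t) (X : orderType d).

Fixpoint lex_lt (u v : seq X) : bool :=
  match u, v with
  | [::], [::] => false
  | [::], _ :: _ => true
  | _ :: _, [::] => false
  | a :: u', b :: v' => (a < b)%O || ((a == b) && lex_lt u' v')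
  end.

Definition lyndon (w : seq X) : bool :=
  (0 < size w)%N && [forall i : 'I_(size w), (0 < i)%N ==> lex_lt w (drop i w)].

Definition Zword := {freeg (seq X) / int}.

Fixpoint shuffles (u v : seq X) : seq (seq X) :=
  let fix shv (v : seq X) : seq (seq X) :=
    match u, v with
    | [::], _ => [:: v]
    | _, [::] => [:: u]
    | a :: u', b :: v' =>
        [seq a :: w | w <- shuffles u' v] ++ [seq b :: w | w <- shv v']
    end in shv v.

Definition shuffle (u v : seq X) : Zword :=
  \sum_(w <- shuffles u v) << w >>.

Definition in_M (x : Zword) : Prop :=
  exists l : seq (int * (seq X * seq X)),
    all (fun t => (0 < size t.2.1)%N && (0 < size t.2.2)%N) l /\
    x = \sum_(t <- l) (shuffle t.2.1 t.2.2 *~ t.1).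

Definition homog (s : nat) (x : Zword) : Prop :=
  forall w : seq X, size w != s -> coeff w x = 0.

(* The images of the Lyndon words of length s generate
   Sh_Z(X)_{indec,s} (x) Z/p = Z<X>_s / (M_s + p Z<X>_s):
   every element of Z<X>_s is congruent, modulo M + p Z<X>, to an integral
   linear combination of Lyndon words of length s. *)
Definition lyndon_generate_mod (p s : nat) : Prop :=
  forall f : Zword, homog s f ->
    exists (c : seq (int * seq X)) (m g : Zword),
      all (fun t => lyndon t.2 && (size t.2 == s)) c /\ in_M m /\
      f = \sum_(t <- c) (<< t.2 >> *~ t.1) + m + g *+ p.

End Shuffle.

From HB Require Import structures.
From mathcomp Require Import all_boot all_order all_algebra.
From mathcomp.multinomials Require Import freeg.
Set Implicit Arguments. Unset Strict Implicit. Unset Printing Implicit Defensive.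
Import Order.TTheory Order.DefaultSeqLexiOrder.

(** A non-Lyndon word [w] splits as [w = x ++ y], with [x] and [y] nonempty, so that
    [w] is the lexicographically largest word of the shuffle [x ш y] and occurs there
    [k] times with [1 <= k <= |w|]. Let [v] be the least nonempty suffix of [w]: it is
    a Lyndon word different from [w]; write [w = u v^m] with [v] not a suffix of [u].
    If [u] is nonempty, every nonempty suffix of [u] exceeds [v^m], and [x = u],
    [y = v^m] give [k = 1]; otherwise [m >= 2] and [x = v^(m-1)], [y = v] give [k = m].
    Since [|w| = s < p], [k] is invertible mod [p], so modulo [M + pZ<X>] the word [w]
    is a combination of the other words of [x ш y], all smaller rearrangements of [w];
    induction on the rank of [w] among its rearrangements concludes. *)

Section Words.
Local Open Scope order_scope.
Variables (d : Order.disp_t) (X : orderType d).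
Implicit Types (a b c : X) (u v w x y z p q r s t : seq X).

Lemma lex_ltE u v : lex_lt u v = (u < v).
Proof. by elim: u v => [|a u IH] [|b v] //=; rewrite ltxi_cons IH; case: ltgtP. Qed.

Lemma ltxi_head a b u v : a < b -> a :: u < b :: v.
Proof. by move=> ab; rewrite ltxi_cons (ltW ab) lt_geF. Qed.

Lemma lexi_prefix u r : u <= u ++ r.
Proof. by elim: u => [|a u IH] //=; rewrite eqhead_lexiE. Qed.

Lemma ltxi_prefix u r : (u < u ++ r) = (r != [::]).
Proof. by elim: u => [|a u IH] /=; [exact: ltxi0s | rewrite eqhead_ltxiE]. Qed.

Lemma ltxi_catl p u v : (p ++ u < p ++ v) = (u < v).
Proof. by elim: p => [|a p IH] //=; rewrite eqhead_ltxiE. Qed.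

Lemma ltxi_split u v : u < v ->
  (exists2 r, r != [::] & v = u ++ r) \/ (forall x y, u ++ x < v ++ y).
Proof.
elim: u v => [|a u IH] [|b v] //=; first by left; exists (b :: v).
case: (ltgtP a b) => [ab _|ba|<-]; first by right=> x y; apply: ltxi_head.
  by rewrite ltxi_cons leNgt ba.
rewrite eqhead_ltxiE => /IH [[r r0 ->]|uv]; first by left; exists r.
by right=> x y; rewrite eqhead_ltxiE.
Qed.

Lemma ltxi_catr u v z : u < v -> u < v ++ z.
Proof.
case/ltxi_split => [[r r0 ->]|uv]; last by rewrite -[u]cats0 uv.
by rewrite -catA ltxi_prefix; case: r r0.
Qed.


Lemma shuffles_cons a b u v : shuffles (a :: u) (b :: v) =
  [seq a :: t | t <- shuffles u (b :: v)] ++ [seq b :: t | t <- shuffles (a :: u) v].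
Proof. by []. Qed.

Lemma shuffles0s v : shuffles [::] v = [:: v]. Proof. by case: v. Qed.
Lemma shuffless0 u : shuffles u [::] = [:: u]. Proof. by case: u. Qed.

Lemma perm_mem_shuffles u v t : t \in shuffles u v -> perm_eq t (u ++ v).
Proof.
elim: u v t => [|a u IHu] v t; first by rewrite shuffles0s inE => /eqP->.
elim: v t => [|b v IHv] t; first by rewrite shuffless0 inE cats0 => /eqP->.
rewrite shuffles_cons mem_cat => /orP[]/mapP[t' t'in ->].
  by rewrite /= perm_cons; apply: IHu.
rewrite -[b :: v]cat1s perm_sym (perm_catCA (a :: u) [:: b] v) /= perm_cons perm_sym.
exact: IHv.
Qed.

Lemma shufflesC u v : perm_eq (shuffles u v) (shuffles v u).
Proof.
elim: u v => [|a u IHu] v; first by rewrite shuffles0s shuffless0.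
elim: v => [|b v IHv]; first by rewrite shuffles0s shuffless0.
by rewrite !shuffles_cons perm_catC perm_cat // perm_map.
Qed.

Fixpoint max_shuffle u v : seq X :=
  let fix max_shuffle_u v :=
    match u, v with
    | [::], _ => v
    | _, [::] => u
    | a :: u', b :: v' =>
        Order.max (a :: max_shuffle u' v) (b :: max_shuffle_u v')
    end in max_shuffle_u v.

Lemma max_shuffle_cons a b u v : max_shuffle (a :: u) (b :: v) =
  Order.max (a :: max_shuffle u (b :: v)) (b :: max_shuffle (a :: u) v).
Proof. by []. Qed.

Lemma max_shuffle0s v : max_shuffle [::] v = v. Proof. by case: v. Qed.
Lemma max_shuffles0 u : max_shuffle u [::] = u. Proof. by case: u. Qed.

Lemma le_max_shuffle_consl a u v : a :: max_shuffle u v <= max_shuffle (a :: u) v.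
Proof. by case: v => [|b v]; rewrite ?max_shuffles0 // max_shuffle_cons le_max lexx. Qed.

Lemma le_max_shuffle_consr b u v : b :: max_shuffle u v <= max_shuffle u (b :: v).
Proof. by case: u => [|a u]; rewrite ?max_shuffle0s // max_shuffle_cons le_max lexx orbT. Qed.

Lemma max_shuffle_consl_le a u v B : a :: max_shuffle u v <= B ->
    (forall b v', v = b :: v' -> b :: max_shuffle (a :: u) v' <= B) ->
  max_shuffle (a :: u) v <= B.
Proof.
case: v => [|b v] leB leB'; first by rewrite max_shuffles0 -(max_shuffles0 u).
by rewrite max_shuffle_cons ge_max leB leB'.
Qed.

Lemma max_shuffle_consl_lt a u v B : a :: max_shuffle u v < B ->
    (forall b v', v = b :: v' -> b :: max_shuffle (a :: u) v' < B) ->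
  max_shuffle (a :: u) v < B.
Proof.
case: v => [|b v] ltB ltB'; first by rewrite max_shuffles0 -(max_shuffles0 u).
by rewrite max_shuffle_cons gt_max ltB ltB'.
Qed.

Lemma mem_shuffles_le u v t : t \in shuffles u v -> t <= max_shuffle u v.
Proof.
elim: u v t => [|a u IHu] v t; first by rewrite shuffles0s max_shuffle0s inE => /eqP->.
elim: v t => [|b v IHv] t; first by rewrite shuffless0 max_shuffles0 inE => /eqP->.
rewrite shuffles_cons mem_cat => /orP[]/mapP[t' t'in ->].
  by apply: le_trans _ (le_max_shuffle_consl _ _ _); rewrite eqhead_lexiE IHu.
by apply: le_trans _ (le_max_shuffle_consr _ _ _); rewrite eqhead_lexiE IHv.
Qed.

Lemma max_shuffle_move_prefix p x y : y <= x ->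
  max_shuffle (p ++ x) y <= max_shuffle x (p ++ y).
Proof.
elim: x p y => [|a x IHx] p y.
  by rewrite lexis0 => /eqP->; rewrite !cats0 max_shuffle0s max_shuffles0.
move=> yx; elim: p => [|c p IHp]; first exact: lexx.
rewrite !cat_cons; apply: max_shuffle_consl_le.
  by apply: le_trans _ (le_max_shuffle_consr _ _ _); rewrite eqhead_lexiE.
move=> b y' Ey; apply: le_trans _ (le_max_shuffle_consl _ _ _); move: yx; rewrite {}Ey.
case: (ltgtP a b) => [ab|ba|<-].
- by rewrite leNgt ltxi_head.
- by move=> _; apply/ltW/ltxi_head.
- rewrite !eqhead_lexiE => /(IHx (c :: p ++ [:: a])).
  by rewrite /= -!catA.
Qed.

Definition suffixes_gt x y := forall t, suffix t x -> t != [::] -> y < t.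

Lemma suffixes_gt_suffix x x' y : suffix x' x -> suffixes_gt x y -> suffixes_gt x' y.
Proof. by move=> sx gt t st; apply: gt; apply: suffix_trans st sx. Qed.

(* The prefix [p] and the tail [z] make the induction on [s] go through; the lemma is
   used with [p = [:: a]]. *)
Lemma max_shuffle_rot_lt s p z y : p != [::] -> suffixes_gt (p ++ s) (p ++ y) ->
  max_shuffle (p ++ s ++ z) y < s ++ z ++ p ++ y.
Proof.
elim: s p y => [|c' s IH] p y p0 gt.
  by move: (gt p); rewrite cats0 suffix_refl p0 ltNge lexi_prefix => /(_ isT isT).
case: p p0 gt => [//|c p] _ gt.
have lt_s : (c :: p) ++ y < c' :: s by apply: gt => //; exact: suffix_suffix.
have lt_ys : y < c' :: s by have := gt _ (suffix_refl _) isT; rewrite ltxi_catl.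
rewrite cat_cons; apply: max_shuffle_consl_lt => [|b y' Ey].
  case: (ltgtP c c') => [cc'|c'c|Ec].
  - exact: ltxi_head.
  - by move: (ltxi_lehead lt_s); rewrite leNgt c'c.
  - subst c'; rewrite cat_cons eqhead_ltxiE.
    have lt_ysz : y <= c :: s ++ z by exact: ltW (ltxi_catr z lt_ys).
    apply: le_lt_trans (max_shuffle_move_prefix p lt_ysz) _.
    apply: (IH [:: c] (p ++ y)) => //.
    by apply: suffixes_gt_suffix gt; exact: suffix_suffix.
rewrite {}Ey in lt_ys gt *.
case: (ltgtP b c') => [bc'|c'b|Eb].
- exact: ltxi_head.
- by move: (ltxi_lehead lt_ys); rewrite leNgt c'b.
- subst c'; rewrite eqhead_ltxiE.
  by have := IH ((c :: p) ++ [:: b]) y'; rewrite -!catA /=; apply.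
Qed.

Lemma shuffles_tail_lt a b s z y t : suffixes_gt (a :: s) (b :: y) ->
  t \in shuffles (a :: s ++ z) y -> b :: t < a :: s ++ z ++ b :: y.
Proof.
move=> gt t_in.
have lt_ys : b :: y < a :: s by apply: gt => //; exact: suffix_refl.
case: (ltgtP a b) => [ab|ba|Ea].
- by move: (ltxi_lehead lt_ys); rewrite leNgt ab.
- exact: ltxi_head.
- subst b; rewrite eqhead_ltxiE; apply: le_lt_trans (mem_shuffles_le t_in) _.
  exact: (max_shuffle_rot_lt z (p := [:: a])).
Qed.

Definition top_shuffle u v w k :=
  (forall t, t \in shuffles u v -> t <= w) /\ count_mem w (shuffles u v) = k.

Lemma top_shuffleC u v w k : top_shuffle u v w k -> top_shuffle v u w k.
Proof.
case=> le_w cnt; split; last by rewrite -(permP (shufflesC u v)).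
by move=> t; rewrite -(perm_mem (shufflesC u v)); apply: le_w.
Qed.

Lemma count_mem_map_cons a w L : count_mem (a :: w) [seq a :: t | t <- L] = count_mem w L.
Proof. by rewrite count_map; apply: eq_count => t /=; rewrite eqseq_cons eqxx. Qed.

Lemma top_shuffle_cons_lt a b u v w k : top_shuffle u (b :: v) w k ->
    (forall t, t \in shuffles (a :: u) v -> b :: t < a :: w) ->
  top_shuffle (a :: u) (b :: v) (a :: w) k.
Proof.
case=> le_w cnt lt_w; rewrite /top_shuffle shuffles_cons count_cat count_mem_map_cons cnt.
split=> [t|].
  rewrite mem_cat => /orP[]/mapP[t' t'_in ->]; first by rewrite eqhead_lexiE le_w.
  exact/ltW/lt_w.
suff -> : count_mem (a :: w) [seq b :: t | t <- shuffles (a :: u) v] = 0 by rewrite addn0.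
by apply/count_memPn/mapP => [[t t_in Et]]; move: (lt_w t t_in); rewrite -Et ltxx.
Qed.

Lemma top_shuffle_cons_eq a u v w k1 k2 :
    top_shuffle u (a :: v) w k1 -> top_shuffle (a :: u) v w k2 ->
  top_shuffle (a :: u) (a :: v) (a :: w) (k1 + k2).
Proof.
case=> le1 cnt1 [le2 cnt2].
rewrite /top_shuffle shuffles_cons count_cat !count_mem_map_cons cnt1 cnt2.
split=> // t; rewrite mem_cat => /orP[]/mapP[t' t'_in ->]; rewrite eqhead_lexiE.
  exact: le1.
exact: le2.
Qed.

Lemma top_shuffle_cat x y : y != [::] -> suffixes_gt x y -> top_shuffle x y (x ++ y) 1.
Proof.
elim: x y => [|a x IH] y y0 gt.
  by rewrite /top_shuffle shuffles0s /= eqxx; split=> // t; rewrite inE => /eqP->.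
case: y y0 gt => [//|b y] _ gt.
apply: top_shuffle_cons_lt => [|t].
  by apply: IH => //; exact: suffixes_gt_suffix (suffix_cons _ _) gt.
by have := @shuffles_tail_lt a b x [::] y t gt; rewrite cats0.
Qed.

Lemma size_suffix_lt s t : suffix s t -> s != t -> (size s < size t)%N.
Proof.
case/suffixP=> [[|a r] ->]; first by rewrite eqxx.
by rewrite size_cat addSn ltnS leq_addl.
Qed.

Lemma suffix_cat_nil v r : suffix (v ++ r) v -> r = [::].
Proof. by move/size_suffix; rewrite size_cat -[leqRHS]addn0 leq_add2l leqn0 size_eq0 => /eqP. Qed.

Lemma suffix_consE t a w : suffix t (a :: w) -> (t == a :: w) || suffix t w.
Proof.
case/suffixP=> [[|b r] /=]; first by move=> <-; rewrite eqxx.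
by case=> _ ->; rewrite suffix_suffix orbT.
Qed.

Definition lt_proper_suffixes w := forall t, suffix t w -> t != [::] -> t != w -> w < t.

Lemma lyndonP w : reflect (w != [::] /\ lt_proper_suffixes w) (lyndon w).
Proof.
rewrite /lyndon lt0n size_eq0; apply: (iffP andP) => -[w0 lt_w]; split=> //.
  move=> t t_suf t0 tw; set i := (size w - size t)%N.
  have Et : drop i w = t by apply/eqP; rewrite -suffixE.
  have i_lt : (i < size w)%N by rewrite /i ltn_subrL !lt0n !size_eq0 w0 t0.
  have i_gt0 : (0 < i)%N by rewrite subn_gt0 size_suffix_lt.
  by rewrite -Et -lex_ltE; apply: (implyP (forallP lt_w (Ordinal i_lt))).
apply/forallP=> i; apply/implyP=> i_gt0; rewrite lex_ltE; apply: lt_w.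
- exact: suffix_drop.
- by rewrite -size_eq0 size_drop subn_eq0 -ltnNge.
- have : (size (drop i w) < size w)%N by rewrite size_drop ltn_subrL i_gt0 lt0n size_eq0.
  by apply: contraTneq => ->; rewrite ltnn.
Qed.

Definition wpow v n := flatten (nseq n v).

Lemma wpowS v n : wpow v n.+1 = v ++ wpow v n. Proof. by []. Qed.

Lemma wpowSr v n : wpow v n.+1 = wpow v n ++ v.
Proof. by elim: n => [|n IH]; [exact: cats0 | rewrite wpowS [in LHS]IH catA]. Qed.

Lemma size_wpow v n : size (wpow v n) = (n * size v)%N.
Proof. by elim: n => [|n IH] //; rewrite wpowS size_cat IH mulSn. Qed.

Lemma wpow_eq0 v n : (wpow v n == [::]) = (n == 0%N) || (v == [::]).
Proof. by rewrite -!size_eq0 size_wpow muln_eq0. Qed.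

Section LyndonPowers.
Variables (a : X) (v' : seq X).
Local Notation v := (a :: v').
Hypothesis v_lyndon : lt_proper_suffixes v.

Lemma lyndon_lt_suffix_cat t x y : suffix t v -> t != [::] -> t != v -> v ++ x < t ++ y.
Proof.
move=> t_suf t0 tv; case: (ltxi_split (v_lyndon t_suf t0 tv)) => // -[r r0 Et].
by move: t_suf r0; rewrite Et => /suffix_cat_nil ->.
Qed.

Lemma suffixes_gt_lyndon s : suffix s v -> s != v -> suffixes_gt s v.
Proof.
move=> s_suf sv t t_suf t0; apply: v_lyndon => //; first exact: suffix_trans t_suf s_suf.
by apply: contraTneq (size_suffix_lt s_suf sv) => <-; rewrite -leqNgt size_suffix.
Qed.

Lemma top_shuffle_lyndon_suffix_pow i s : suffix s v -> s != v ->
  top_shuffle (s ++ wpow v i) v (s ++ wpow v i.+1) i.+1.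
Proof.
have proper_tail e s' : suffix (e :: s') v -> e :: s' != v -> suffix s' v /\ s' != v.
  move=> es_suf _; split; first exact: suffix_trans (suffix_cons _ _) es_suf.
  by apply: contraTneq (size_suffix es_suf) => ->; rewrite ltnn.
elim: i s => [|i IHi] s.
  elim: s => [|e s IHs] s_suf sv.
    by rewrite /top_shuffle /wpow /= cats0 eqxx; split=> // t; rewrite inE => /eqP->.
  case: (proper_tail _ _ s_suf sv) => s_suf' sv'.
  rewrite !cat_cons; apply: top_shuffle_cons_lt => [|t]; first exact: IHs.
  by rewrite [in X in _ < X]wpowSr; apply: shuffles_tail_lt; apply: suffixes_gt_lyndon.
elim: s => [|e s IHs] s_suf sv.
  have gt_v' : suffixes_gt v' (wpow v i.+1).
    move=> t t_suf t0; rewrite -[t]cats0 wpowS.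
    apply: lyndon_lt_suffix_cat => //; first exact: suffix_trans t_suf (suffix_cons _ _).
    by apply: contraTneq (size_suffix t_suf) => ->; rewrite ltnn.
  have v'v : v' != v by apply/eqP => /(congr1 size) /n_Sn.
  rewrite !cat0s [wpow v i.+1]wpowS [wpow v i.+2]wpowS !cat_cons -[i.+2]addn1.
  apply: (top_shuffle_cons_eq (IHi v' (suffix_cons _ _) v'v)).
  exact: top_shuffleC (top_shuffle_cat _ gt_v').
case: (proper_tail _ _ s_suf sv) => s_suf' sv'.
rewrite !cat_cons; apply: top_shuffle_cons_lt => [|t]; first exact: IHs.
by rewrite [in X in _ < X]wpowSr; apply: shuffles_tail_lt; apply: suffixes_gt_lyndon.
Qed.

End LyndonPowers.

Lemma top_shuffle_lyndon_pow v i : v != [::] -> lt_proper_suffixes v ->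
  top_shuffle (wpow v i) v (wpow v i.+1) i.+1.
Proof.
by case: v => [//|a v] _ lyn; exact: (top_shuffle_lyndon_suffix_pow lyn i (suffix0s _)).
Qed.

Lemma exists_min_suffix w : w != [::] ->
  exists2 v, suffix v w && (v != [::]) & forall t, suffix t w -> t != [::] -> v <= t.
Proof.
elim: w => [//|a w IH] _; case: (eqVneq w [::]) => [->|w0].
  exists [:: a]; first by rewrite suffix_refl.
  by move=> t /suffix_consE; rewrite suffixs0 => /orP[] /eqP->.
have [v /andP[v_suf v0] v_min] := IH w0.
case: (leP v (a :: w)) => [vw|wv].
  exists v; first by rewrite (suffix_trans v_suf (suffix_cons _ _)).
  by move=> t /suffix_consE /orP[/eqP->|/v_min] //.
exists (a :: w); first by rewrite suffix_refl.
move=> t /suffix_consE /orP[/eqP->|t_suf t0] //.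
exact/ltW/(lt_le_trans wv)/v_min.
Qed.

Lemma split_pow_suffix v u : v != [::] ->
  exists u' k, u = u' ++ wpow v k /\ ~~ suffix v u'.
Proof.
move=> v0; have [n] := ubnP (size u); elim: n u => [//|n IH] u u_lt.
case: (boolP (suffix v u)) => [/suffixP[y Ey]|v_nsuf]; last first.
  by exists u, 0%N; rewrite /wpow /= cats0.
have [|u' [k [Ey' u'_nsuf]]] := IH y.
  rewrite Ey size_cat ltnS in u_lt; apply: leq_trans u_lt.
  by rewrite -addn1 leq_add2l lt0n size_eq0.
by exists u', k.+1; rewrite Ey Ey' wpowSr catA.
Qed.

Lemma suffixes_gt_pow v u k : v != [::] -> ~~ suffix v u ->
    (forall t, suffix t (u ++ wpow v k.+1) -> t != [::] -> v <= t) ->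
  suffixes_gt u (wpow v k.+1).
Proof.
move=> v0 v_nsuf v_min s; have [n] := ubnP (size s).
elim: n s => [//|n IH] s s_lt s_suf s0.
have vs : v <= s ++ wpow v k.+1.
  apply: v_min; last by case: (s) s0.
  by case/suffixP: s_suf => r ->; rewrite -catA suffix_suffix.
case: (ltgtP s v) => [sv|{}vs|Es]; last by move: v_nsuf; rewrite -Es s_suf.
  exfalso; move: vs; apply/negP; rewrite -ltNge.
  case: (ltxi_split sv) => [[q q0 Eq]|s_ll_v]; last first.
    by have := s_ll_v (wpow v k.+1) [::]; rewrite cats0.
  have vq : v < q.
    have q_lt : (size q < size v)%N.
      by rewrite Eq size_cat -[ltnLHS]add0n ltn_add2r lt0n size_eq0.
    have qv : q != v by apply: contraTneq q_lt => ->; rewrite ltnn.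
    rewrite lt_neqAle eq_sym qv v_min // (suffix_trans (_ : suffix q v)) //.
      by rewrite Eq suffix_suffix.
    by rewrite wpowSr catA suffix_suffix.
  case: (ltxi_split vq) => [[r r0 Er]|v_ll_q].
    by move: (suffix_suffix s q) r0; rewrite -Eq Er => /suffix_cat_nil ->.
  by rewrite [X in _ < X]Eq ltxi_catl wpowS -[q]cats0 v_ll_q.
case: (ltxi_split vs) => [[r r0 Er]|v_ll_s]; last by rewrite -[s]cats0 wpowS v_ll_s.
have r_suf : suffix r u by apply: suffix_trans s_suf; rewrite Er suffix_suffix.
have r_lt : (size r < n)%N.
  rewrite Er size_cat ltnS in s_lt; apply: leq_trans s_lt.
  by rewrite -add1n leq_add2r lt0n size_eq0.
rewrite Er wpowS ltxi_catl; apply: le_lt_trans (IH r r_lt r_suf r0).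
by rewrite [X in _ <= X]wpowSr lexi_prefix.
Qed.

Lemma nonlyndon_top_shuffle w : w != [::] -> ~~ lyndon w ->
  exists x y k, [/\ x != [::], y != [::], x ++ y = w,
                    (0 < k <= size w)%N & top_shuffle x y w k].
Proof.
move=> w0 w_nlyn; have [v /andP[v_suf v0] v_min] := exists_min_suffix w0.
have v_lyndon : lt_proper_suffixes v.
  move=> t t_suf t0 tv; rewrite lt_neqAle eq_sym tv v_min //.
  exact: suffix_trans t_suf v_suf.
have vw : v != w.
  apply: contraNneq w_nlyn => Ev; apply/lyndonP; rewrite -Ev; split=> //.
have [u [[|k] [Ew v_nsuf]]] := split_pow_suffix w v0.
  by move: v_suf; rewrite Ew /wpow /= cats0 (negbTE v_nsuf).
case: (eqVneq u [::]) => [u0|u0]; last first.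
  exists u, (wpow v k.+1), 1%N; split=> //.
  - by rewrite wpow_eq0 negb_or v0.
  - by case: (w) w0.
  rewrite Ew; apply: top_shuffle_cat; first by rewrite wpow_eq0 negb_or v0.
  by apply: suffixes_gt_pow => //; rewrite -Ew.
move: Ew; rewrite u0 cat0s; case: k => [|k] Ew.
  by move: vw; rewrite Ew /wpow /= cats0 eqxx.
exists (wpow v k.+1), v, k.+2; split=> //.
- by rewrite wpow_eq0 negb_or v0.
- by rewrite Ew -wpowSr.
- by rewrite Ew size_wpow leq_pmulr // lt0n size_eq0.
- by rewrite Ew; exact: top_shuffle_lyndon_pow.
Qed.

End Words.

Lemma ltn_count_lt (d : Order.disp_t) (T : porderType d) (L : seq T) r t :
  (r < t)%O -> r \in L -> (count (< r)%O L < count (< t)%O L)%N.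
Proof.
move=> rt; elim: L => [//|z L IH]; rewrite inE => /orP[/eqP<-|rL] /=.
  rewrite ltxx rt add0n add1n ltnS; apply: sub_count => x /= xr.
  exact: lt_trans xr rt.
rewrite -addnS leq_add ?IH //; case: (boolP (z < r)%O) => // zr.
by rewrite (lt_trans zr rt).
Qed.

Section LyndonSpan.
Import GRing.Theory.
Local Open Scope ring_scope.
Variables (d : Order.disp_t) (X : orderType d) (p s : nat).
Local Notation ZX := (Zword X).
Implicit Types (x y w : seq X).

Lemma in_M0 : in_M (0 : ZX).
Proof. by exists [::]; rewrite big_nil. Qed.

Lemma in_MD (f g : ZX) : in_M f -> in_M g -> in_M (f + g).
Proof.
case=> [l1 [all1 ->]] [l2 [all2 ->]]; exists (l1 ++ l2).
by rewrite all_cat all1 all2 big_cat.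
Qed.

Lemma in_MZ (f : ZX) z : in_M f -> in_M (f *~ z).
Proof.
case=> [l [all_l ->]]; exists [seq (t.1 * z, t.2) | t <- l]; split.
  by rewrite all_map; apply: sub_all all_l => t.
by rewrite big_map mulrz_suml; apply: eq_bigr => t _; rewrite mulrzA.
Qed.

Lemma in_M_shuffle x y : x != [::] -> y != [::] -> in_M (shuffle x y).
Proof.
by move=> x0 y0; exists [:: (1, (x, y))]; rewrite big_seq1 /= !lt0n !size_eq0 x0 y0.
Qed.

Lemma shuffle_count_mem x y (t : seq X) : shuffle x y =
  << t >> *+ count_mem t (shuffles x y) + \sum_(r <- shuffles x y | r != t) << r >>.
Proof.
rewrite /shuffle (bigID (pred1 t)) /=; congr (_ + _).
by rewrite (eq_bigr (fun=> << t >>)) => [|r /eqP->]; rewrite // big_const_seq iter_addr_0.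
Qed.

(* Shaped as the conclusion of [lyndon_generate_mod], which is thus [homog s f ->
   lyndon_spanned f] by conversion. *)
Definition lyndon_spanned (f : ZX) := exists (c : seq (int * seq X)) (m g : ZX),
  all (fun t => lyndon t.2 && (size t.2 == s)) c /\ in_M m /\
  f = \sum_(t <- c) (<< t.2 >> *~ t.1) + m + g *+ p.

Lemma lyndon_spanned_lyndon w : lyndon w -> size w = s -> lyndon_spanned << w >>.
Proof.
move=> w_lyn sw; exists [:: (1, w)], 0, 0.
by rewrite /= w_lyn sw eqxx big_seq1 mul0rn !addr0 mulr1z; split=> //; split=> //; exact: in_M0.
Qed.

Lemma lyndon_spanned_M m : in_M m -> lyndon_spanned m.
Proof. by move=> Mm; exists [::], m, 0; rewrite big_nil add0r mul0rn addr0. Qed.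

Lemma lyndon_spanned_Mn g : lyndon_spanned (g *+ p).
Proof. by exists [::], 0, g; rewrite big_nil !add0r; split=> //; split=> //; exact: in_M0. Qed.

Lemma lyndon_spannedD f1 f2 : lyndon_spanned f1 -> lyndon_spanned f2 -> lyndon_spanned (f1 + f2).
Proof.
case=> [c1 [m1 [g1 [all1 [M1 ->]]]]] [c2 [m2 [g2 [all2 [M2 ->]]]]].
exists (c1 ++ c2), (m1 + m2), (g1 + g2); split; first by rewrite all_cat all1 all2.
by split; [exact: in_MD | rewrite big_cat mulrnDl addrACA [X in X + _]addrACA].
Qed.

Lemma lyndon_spannedZ f z : lyndon_spanned f -> lyndon_spanned (f *~ z).
Proof.
case=> [c [m [g [all_c [Mm ->]]]]].
exists [seq (t.1 * z, t.2) | t <- c], (m *~ z), (g *~ z); split.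
  by rewrite all_map; apply: sub_all all_c => t.
split; first exact: in_MZ.
rewrite !mulrzDl big_map mulrz_suml; congr (_ + _ + _).
  by apply: eq_bigr => t _; rewrite mulrzA.
by rewrite !pmulrn -!mulrzA mulrC.
Qed.

Lemma lyndon_spanned_sum (I : Type) (r : seq I) (P : pred I) (F : I -> ZX) :
  (forall i, P i -> lyndon_spanned (F i)) -> lyndon_spanned (\sum_(i <- r | P i) F i).
Proof.
move=> FP; apply: big_rec => [|i f Pi]; first exact: lyndon_spanned_M in_M0.
exact/lyndon_spannedD/FP.
Qed.

Lemma lyndon_spanned_coprime f k : coprime k p -> lyndon_spanned (f *+ k) -> lyndon_spanned f.
Proof.
move=> kp fk; have /coprimezP [[u v] /= Euv] : coprimez k p := kp.
rewrite -[f]mulr1z -Euv mulrzDr ![_ * _%:Z]mulrC !mulrzA -!pmulrn.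
by apply: lyndon_spannedD; apply: lyndon_spannedZ => //; exact: lyndon_spanned_Mn.
Qed.

Hypotheses (p_prime : prime p) (s_gt0 : (0 < s)%N) (s_lt_p : (s < p)%N).

Lemma lyndon_spanned_word w : size w = s -> lyndon_spanned << w >>.
Proof.
move=> sw; suff IH : forall t, perm_eq t w -> lyndon_spanned << t >> by exact/IH/perm_refl.
move=> t; have [n] := ubnP (count (< t)%O (permutations w)).
elim: n t => [//|n IH] t t_lt t_w; have st : size t = s by rewrite (perm_size t_w).
case: (boolP (lyndon t)) => t_lyn; first exact: lyndon_spanned_lyndon.
have t0 : t != [::] by rewrite -size_eq0 st -lt0n.
have [x [y [k [x0 y0 xyt /andP[k_gt0 k_le] [le_t cnt]]]]] := nonlyndon_top_shuffle t0 t_lyn.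
have k_coprime : coprime k p.
  by rewrite coprime_sym prime_coprime // gtnNdvd // (leq_ltn_trans k_le) // st.
apply: (lyndon_spanned_coprime k_coprime).
rewrite (_ : << t >> *+ k = shuffle x y - \sum_(r <- shuffles x y | r != t) << r >>); last first.
  by rewrite (shuffle_count_mem x y t) cnt addrK.
apply: lyndon_spannedD; first exact/lyndon_spanned_M/in_M_shuffle.
rewrite -mulrN1z; apply: lyndon_spannedZ; rewrite big_seq_cond.
apply: lyndon_spanned_sum => r /andP[r_in rt].
have r_lt : (r < t)%O by rewrite lt_neqAle rt le_t.
have r_w : perm_eq r w by apply: perm_trans (perm_mem_shuffles r_in) _; rewrite xyt.
have r_count : (count (< r)%O (permutations w) < n)%N.
  by apply: leq_trans (ltn_count_lt r_lt _) _; rewrite ?mem_permutations // -ltnS.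
exact: IH r_count r_w.
Qed.

Lemma lyndon_spanned_homog f : homog s f -> lyndon_spanned f.
Proof.
move=> f_homog; rewrite -(freeg_sumE f) big_seq; apply: lyndon_spanned_sum => w w_dom.
have sw : size w = s.
  by apply/eqP; apply: contraTT w_dom => /f_homog; rewrite mem_dom => ->; rewrite eqxx.
by rewrite -[coeff w f]intz -freegU_mulz; apply/lyndon_spannedZ/lyndon_spanned_word.
Qed.

End LyndonSpan.

Theorem proposition6p2 (p : nat) (d : Order.disp_t) (X : orderType d)
    (x0 : X) (s : nat) :
  prime p -> (1 <= s)%N -> (s < p)%N -> lyndon_generate_mod X p s.
Proof. by move=> p_prime s_gt0 s_lt_p f; exact: lyndon_spanned_homog. Qed.
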